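(* Assume $\mathcal{Z}$ is norm-Euclidean. Then there is a constant $L>1$ such that for every digit string $s$ with $C_s$ nonempty, $\sup_{y\in T^{|s|}C_s}\omega_s(y)\le L\inf_{y\in T^{|s|}C_s}\omega_s(y)$.
   Context: $X=\mathbb{R}^d$ (including $\mathbb{C},\mathbb{H},\mathbb{O}$ as $\mathbb{R}^2,\mathbb{R}^4,\mathbb{R}^8$) with Euclidean norm and distance. $\iota:X\setminus\{0\}\to X\setminus\{0\}$ satisfies $|\iota x|=1/|x|$, $d(\iota x,\iota y)=d(x,y)/(|x||y|)$ and $\iota\circ\iota=\mathrm{id}$; $\iota(0)=0$. $\mathcal{Z}$ is a discrete additive subgroup with compact quotient, $K=\{x:d(x,0)\le d(x,z)\ \forall z\in\mathcal{Z}\}$ its Dirichlet region with a boundary choice so that each $x$ has a unique $[x]\in\mathcal{Z}$ with $x-[x]\in K$; norm-Euclidean means $\operatorname{rad}(K)=\sup_{x\in K}|x|<1$. $Tx=\iota x-[\iota x]$ ($x\ne0$), $T0=0$. Cylinders: $C_\emptyset=K$, $C_{as}=K\cap\iota(C_s+a)$. For $s=a_1\dots a_n$, $T_s=T_{a_n}\circ\cdots\circ T_{a_1}$ on $C_s$ with $T_a(x)=\iota x-a$, and $\omega_s(y)=|\det DT_s^{-1}(y)|$ with $T_s^{-1}=T_{a_1}^{-1}\circ\cdots\circ T_{a_n}^{-1}$, $T_a^{-1}(y)=\iota(y+a)$. *)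

From HB Require Import structures.
From mathcomp Require Import all_boot all_order all_algebra.
From mathcomp Require Import all_classical all_reals all_analysis.
Set Implicit Arguments. Unset Strict Implicit. Unset Printing Implicit Defensive.
Import Order.TTheory GRing.Theory Num.Theory.
Import numFieldNormedType.Exports.
Local Open Scope classical_set_scope.
Local Open Scope ring_scope.

Section Defs.
Context {R : realType} {d : nat}.
Local Notation X := 'rV[R]_d.

Definition enorm (x : X) : R := Num.sqrt (\sum_(i < d) x ord0 i ^+ 2).
Definition edist (x y : X) : R := enorm (x - y).

Definition is_inversion (iota : X -> X) : Prop :=
  [/\ iota 0 = 0,
      (forall x, x != 0 -> iota x != 0),
      (forall x, x != 0 -> enorm (iota x) = 1 / enorm x),
      (forall x y, x != 0 -> y != 0 ->
         edist (iota x) (iota y) = edist x y / (enorm x * enorm y)) &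
      (forall x, iota (iota x) = x)].

Definition is_cocompact_lattice (Zs : set X) : Prop :=
  [/\ Zs 0,
      (forall z w, Zs z -> Zs w -> Zs (z - w)),
      (exists2 r : R, 0 < r & forall z, Zs z -> z != 0 -> r <= enorm z) &
      (exists M : R, forall x, exists2 z, Zs z & edist x z <= M)].

Definition dirichlet (Zs : set X) : set X :=
  [set x | forall z, Zs z -> edist x 0 <= edist x z].

Definition is_boundary_choice (Zs : set X) (Kc : set X) (flr : X -> X) : Prop :=
  [/\ Kc `<=` dirichlet Zs,
      (forall x, Zs (flr x) /\ Kc (x - flr x)) &
      (forall x z, Zs z -> Kc (x - z) -> z = flr x)].

Definition norm_euclidean (Zs : set X) : Prop :=
  exists2 c : R, c < 1 & forall x, dirichlet Zs x -> enorm x <= c.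

Definition Tmap (iota flr : X -> X) (x : X) : X :=
  if x == 0 then 0 else iota x - flr (iota x).

Fixpoint cyl (Kc : set X) (iota : X -> X) (s : seq X) : set X :=
  match s with
  | [::] => Kc
  | a :: s' => Kc `&` (iota @` [set y + a | y in cyl Kc iota s'])
  end.

Definition Tinv (iota : X -> X) (s : seq X) : X -> X :=
  foldr (fun a f => (fun y => iota (y + a)) \o f) id s.

Definition omega (iota : X -> X) (s : seq X) (y : X) : R :=
  `| \det (lin1_mx ('d (Tinv iota s) y)) |.

End Defs.

From Pilot Require Import Defs.
From HB Require Import structures.
From mathcomp Require Import all_boot all_order all_algebra.
From mathcomp Require Import all_classical all_reals all_analysis.
From mathcomp Require Import ring lra.
Import Order.TTheory GRing.Theory Num.Theory.
Import numFieldNormedType.Exports.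
Local Open Scope classical_set_scope.
Local Open Scope ring_scope.

(* An inversion is a linear isometry composed with the standard inversion
   x |-> x / |x|^2, so its differential at w is conformal with factor |w|^-2,
   and omega_s at y is the product of the factors |u_k + a_k|^(-2d) along the
   backward orbit u_k of y.  On a cylinder this orbit stays in K, where
   |x|^2 <= q < 1 by norm-Euclideanity; hence |u_k + a_k|^2 >= 1/q, each
   inverse branch contracts squared distances by q^2, and the k-th points of
   two orbits are at most 2 q^k apart.  Corresponding factors then differ by
   at most exp(9 d q^k), and the geometric series bounds the distortion of
   omega_s by exp(9 d / (1 - q)).  A zero digit forces T^|s| C_s = {0}. *)

Set Implicit Arguments. Unset Strict Implicit. Unset Printing Implicit Defensive.

Section Dot.
Context {R : realFieldType} {n : nat}.
Implicit Types (u v w : 'rV[R]_n) (a : R).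

Definition dot u v : R := \sum_(i < n) u ord0 i * v ord0 i.
Definition sqnorm v : R := dot v v.

Lemma dotC u v : dot u v = dot v u.
Proof. by apply: eq_bigr => i _; rewrite mulrC. Qed.

Lemma dotDl u v w : dot (u + v) w = dot u w + dot v w.
Proof. by rewrite /dot -big_split; apply: eq_bigr => i _; rewrite !mxE mulrDl. Qed.

Lemma dotZl a u v : dot (a *: u) v = a * dot u v.
Proof. by rewrite /dot mulr_sumr; apply: eq_bigr => i _; rewrite !mxE mulrA. Qed.

Lemma dotNl u v : dot (- u) v = - dot u v.
Proof. by rewrite -scaleN1r dotZl mulN1r. Qed.

Lemma dotBl u v w : dot (u - v) w = dot u w - dot v w.
Proof. by rewrite dotDl dotNl. Qed.

Lemma dotDr u v w : dot u (v + w) = dot u v + dot u w.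
Proof. by rewrite dotC dotDl !(dotC u). Qed.

Lemma dotZr a u v : dot u (a *: v) = a * dot u v.
Proof. by rewrite dotC dotZl dotC. Qed.

Lemma dotBr u v w : dot u (v - w) = dot u v - dot u w.
Proof. by rewrite dotC dotBl !(dotC u). Qed.

Lemma dot0l v : dot 0 v = 0.
Proof. by rewrite -(scale0r 0) dotZl mul0r. Qed.

Lemma sqnorm0 : sqnorm (0 : 'rV[R]_n) = 0.
Proof. exact: dot0l. Qed.

Lemma dot_delta i v : dot (delta_mx ord0 i) v = v ord0 i.
Proof.
rewrite /dot (bigD1 i) //= big1 => [|j ji]; first by rewrite !mxE !eqxx mul1r addr0.
by rewrite !mxE (negbTE ji) andbF mul0r.
Qed.

Lemma sqnorm_ge0 v : 0 <= sqnorm v.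
Proof. by rewrite sumr_ge0 // => i _; rewrite -expr2 sqr_ge0. Qed.

Lemma sqnorm_eq0 v : (sqnorm v == 0) = (v == 0).
Proof.
apply/idP/eqP => [|->]; last by rewrite sqnorm0.
rewrite psumr_eq0 => [/allP v0|i _]; last by rewrite -expr2 sqr_ge0.
apply/rowP => i; rewrite mxE; apply/eqP.
by have := v0 i (mem_index_enum _); rewrite /= mulf_eq0 orbb.
Qed.

Lemma sqnorm_gt0 v : v != 0 -> 0 < sqnorm v.
Proof. by move=> v0; rewrite lt_def sqnorm_eq0 v0 sqnorm_ge0. Qed.

Lemma sqnormD u v : sqnorm (u + v) = sqnorm u + 2 * dot u v + sqnorm v.
Proof. rewrite /sqnorm dotDl !dotDr (dotC v u); ring. Qed.

Lemma sqnormB u v : sqnorm (u - v) = sqnorm u - 2 * dot u v + sqnorm v.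
Proof. rewrite /sqnorm dotBl !dotBr (dotC v u); ring. Qed.

Lemma sqnormZ a v : sqnorm (a *: v) = a ^+ 2 * sqnorm v.
Proof. rewrite /sqnorm dotZl dotZr; ring. Qed.

Lemma sqnormN v : sqnorm (- v) = sqnorm v.
Proof. by rewrite -scaleN1r sqnormZ sqrrN expr1n mul1r. Qed.

Lemma sqnorm_perturb u v (e : R) :
  1 <= sqnorm u -> 0 < e <= 1 -> sqnorm v <= 4 * e ^+ 2 ->
  sqnorm (u + v) <= (1 + 9 * e) * sqnorm u.
Proof.
move=> u1 /andP[e0 e1] v_small.
have dot_le : 2 * e * dot u v <= e ^+ 2 * sqnorm u + sqnorm v.
  by have := sqnorm_ge0 (e *: u - v); rewrite sqnormB sqnormZ dotZl; lra.
by rewrite sqnormD -(ler_pM2l e0); nra.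
Qed.

End Dot.

Section EuclideanNorm.
Context {R : realType} {d : nat}.
Implicit Types x y : 'rV[R]_d.

Lemma enorm_sqnorm x : enorm x = Num.sqrt (sqnorm x).
Proof. by congr Num.sqrt; apply: eq_bigr => i _; rewrite expr2. Qed.

Lemma enorm_ge0 x : 0 <= enorm x.
Proof. exact: sqrtr_ge0. Qed.

Lemma sqr_enorm x : enorm x ^+ 2 = sqnorm x.
Proof. by rewrite enorm_sqnorm sqr_sqrtr // sqnorm_ge0. Qed.

Lemma sqr_edist x y : Defs.edist x y ^+ 2 = sqnorm (x - y).
Proof. exact: sqr_enorm. Qed.

End EuclideanNorm.

Section StandardInversion.
Context {R : realFieldType} {n : nat}.
Implicit Types x y : 'rV[R]_n.

Definition sinv x : 'rV[R]_n := (sqnorm x)^-1 *: x.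

Lemma sqnorm_sinv x : sqnorm (sinv x) = (sqnorm x)^-1.
Proof.
rewrite sqnormZ; have [->|x0] := eqVneq x 0; first by rewrite sqnorm0 invr0 mulr0.
by rewrite expr2 -mulrA mulVf ?mulr1 // sqnorm_eq0.
Qed.

Lemma sinv_eq0 x : (sinv x == 0) = (x == 0).
Proof. by rewrite -sqnorm_eq0 sqnorm_sinv invr_eq0 sqnorm_eq0. Qed.

Lemma sinvK : involutive sinv.
Proof.
move=> x; rewrite /sinv sqnorm_sinv invrK scalerA.
have [->|x0] := eqVneq x 0; first by rewrite scaler0.
by rewrite mulfV ?scale1r // sqnorm_eq0.
Qed.

Lemma sqnorm_sinvB x y : x != 0 -> y != 0 ->
  sqnorm (sinv x - sinv y) = sqnorm (x - y) / (sqnorm x * sqnorm y).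
Proof.
rewrite -!sqnorm_eq0 => x0 y0.
by rewrite sqnormB !sqnorm_sinv /sinv dotZl dotZr sqnormB; field; rewrite x0 y0.
Qed.

End StandardInversion.

Section Inversion.
Context {R : realType} {d : nat}.
Local Notation X := 'rV[R]_d.
Variable iota : X -> X.
Hypothesis iotaP : is_inversion iota.

Lemma iota0 : iota 0 = 0. Proof. by case: iotaP. Qed.

Lemma iotaK : involutive iota. Proof. by case: iotaP. Qed.

Lemma iota_eq0 x : (iota x == 0) = (x == 0).
Proof.
by apply/eqP/eqP => [x0|->]; [rewrite -[x]iotaK x0 iota0 | exact: iota0].
Qed.

Lemma sqnorm_iota x : x != 0 -> sqnorm (iota x) = (sqnorm x)^-1.
Proof.
by case: iotaP => _ _ H _ _ x0; rewrite -!sqr_enorm H // expr_div_n expr1n div1r.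
Qed.

Lemma sqnorm_iotaB x y : x != 0 -> y != 0 ->
  sqnorm (iota x - iota y) = sqnorm (x - y) / (sqnorm x * sqnorm y).
Proof.
by case: iotaP => _ _ _ H _ x0 y0; rewrite -sqr_edist H // expr_div_n exprMn !sqr_enorm.
Qed.

Definition inversion_rot (x : X) : X := iota (sinv x).

Lemma iotaE x : iota x = inversion_rot (sinv x).
Proof. by rewrite /inversion_rot sinvK. Qed.

Lemma inversion_rot0 : inversion_rot 0 = 0.
Proof. by rewrite /inversion_rot /sinv scaler0 iota0. Qed.

Lemma sqnorm_inversion_rot x : sqnorm (inversion_rot x) = sqnorm x.
Proof.
have [->|x0] := eqVneq x 0; first by rewrite inversion_rot0.
by rewrite sqnorm_iota ?sinv_eq0 // sqnorm_sinv invrK.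
Qed.

Lemma sqnorm_inversion_rotB x y :
  sqnorm (inversion_rot x - inversion_rot y) = sqnorm (x - y).
Proof.
have [->|x0] := eqVneq x 0.
  by rewrite inversion_rot0 !sub0r !sqnormN sqnorm_inversion_rot.
have [->|y0] := eqVneq y 0; first by rewrite inversion_rot0 !subr0 sqnorm_inversion_rot.
rewrite sqnorm_iotaB ?sinv_eq0 // sqnorm_sinvB // !sqnorm_sinv.
by move: x0 y0; rewrite -!sqnorm_eq0 => x0 y0; field; rewrite x0 y0.
Qed.

Lemma dot_inversion_rot x y : dot (inversion_rot x) (inversion_rot y) = dot x y.
Proof. by have := sqnorm_inversion_rotB x y; rewrite !sqnormB !sqnorm_inversion_rot; lra. Qed.

(* An isometry fixing 0 preserves the dot product, hence is linear. *)
Lemma inversion_rot_linear : linear inversion_rot.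
Proof.
move=> a x y; apply/eqP; rewrite -subr_eq0 -sqnorm_eq0.
rewrite !(sqnormB, sqnormD, sqnormZ, dotDl, dotDr, dotZl, dotZr, dotBl, dotBr).
rewrite !sqnorm_inversion_rot !dot_inversion_rot /sqnorm.
rewrite !(dotDl, dotDr, dotZl, dotZr) (dotC y x); apply/eqP; ring.
Qed.

End Inversion.

Section Differential.
Context {R : realFieldType} {V W : normedModType R}.

Lemma is_diff_sum m (f df : 'I_m -> V -> W) x :
  (forall i, is_diff x (f i) (df i)) ->
  is_diff x (fun z => \sum_i f i z) (fun h => \sum_i df i h).
Proof.
move=> fx; rewrite -!fct_sumE.
elim/big_ind2 : _ => [|f1 df1 f2 df2 f1x f2x|i _]; last exact: fx.
  exact: is_diff_cst.
exact: is_diffD.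
Qed.

Lemma is_diffZl (k dk : V -> R) (v : W) x :
  is_diff x k dk -> is_diff x (fun z => k z *: v) (fun h => dk h *: v).
Proof.
by move=> kx; apply: DiffDef; [exact: differentiableZl | rewrite diffZl // diff_val].
Qed.

Lemma is_diffV (f df : V -> R) x : is_diff x f df -> f x != 0 ->
  is_diff x (fun z => (f z)^-1) (fun h => - (f x) ^- 2 * df h).
Proof.
move=> fx fx0; apply: DiffDef; first exact: differentiableV.
by rewrite diffV // diff_val.
Qed.

End Differential.

Section RowDifferential.
Context {R : realFieldType} {V W : normedModType R} {n : nat}.

Lemma is_diff_coord (x : 'rV[R]_n) i :
  is_diff x (fun z : 'rV[R]_n => z ord0 i) (fun z => z ord0 i).
Proof.
have coord_linear : linear (fun z : 'rV[R]_n => z ord0 i) by move=> a u v; rewrite !mxE.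
pose coord : {linear 'rV[R]_n -> R} := HB.pack (fun z : 'rV[R]_n => z ord0 i)
  (GRing.isLinear.Build _ _ _ _ _ coord_linear).
have coord_cont : continuous coord := @coord_continuous _ _ _ ord0 i.
by apply: DiffDef; [exact: differentiable_coord | exact: (diff_lin x coord_cont)].
Qed.

Lemma row_sum_deltaF (f : V -> 'rV[R]_n) :
  f = (fun z => \sum_j f z ord0 j *: delta_mx ord0 j).
Proof. by apply/funext => z; rewrite [LHS]row_sum_delta. Qed.

Lemma is_diff_linear_row (f : {linear 'rV[R]_n -> W}) x : is_diff x f f.
Proof.
have fE : f = (fun z => \sum_j z ord0 j *: f (delta_mx ord0 j)) :> (_ -> _).
  apply/funext => z; rewrite [z in LHS]row_sum_delta linear_sum.
  by under eq_bigr do rewrite linearZ.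
rewrite {1 2}fE.
by apply: is_diff_sum => j; apply: is_diffZl; exact: is_diff_coord.
Qed.

Lemma is_diff_scale_row (k dk : V -> R) (f df : V -> 'rV[R]_n) x :
  is_diff x k dk -> is_diff x f df ->
  is_diff x (fun z => k z *: f z) (fun h => k x *: df h + dk h *: f x).
Proof.
move=> kx fx.
have -> : (fun z => k z *: f z) = (fun z => \sum_j (k z * f z ord0 j) *: delta_mx ord0 j).
  by rewrite [LHS]row_sum_deltaF; apply/funext => z; under eq_bigr do rewrite mxE.
apply: is_diff_eq.
  apply: is_diff_sum => j; apply: is_diffZl.
  apply: (@is_diffM _ _ k (fun z => f z ord0 j)).
  exact: (is_diff_comp fx (is_diff_coord (f x) j)).
apply/funext => h; rewrite [RHS]row_sum_delta /=.
by apply: eq_bigr => j _; rewrite /= !mxE (mulrC (dk h)).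
Qed.

End RowDifferential.

Section StandardInversionDifferential.
Context {R : realFieldType} {n : nat}.
Implicit Types x h : 'rV[R]_n.

Lemma is_diff_sqnorm x : is_diff x sqnorm (fun h => 2 * dot x h).
Proof.
have -> : sqnorm = (fun z => \sum_i ((fun z => z ord0 i) * (fun z => z ord0 i)) z)
  :> (_ -> R) by [].
apply: is_diff_eq.
  apply: is_diff_sum => i.
  exact: (is_diffM (is_diff_coord x i) (is_diff_coord x i)).
apply/funext => h; rewrite /dot mulr_sumr; apply: eq_bigr => i _.
by rewrite /= -mulr2n mulr_natl.
Qed.

Definition sinv_diff x h : 'rV[R]_n :=
  (sqnorm x)^-1 *: h - (2 * dot x h / sqnorm x ^+ 2) *: x.

Lemma is_diff_sinv x : x != 0 -> is_diff x sinv (sinv_diff x).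
Proof.
rewrite -sqnorm_eq0 => x0; apply: is_diff_eq.
  exact: (is_diff_scale_row (is_diffV (is_diff_sqnorm x) x0) (is_diff_id x)).
apply/funext => h; rewrite /sinv_diff mulNr scaleNr; congr (_ - _ *: _).
by rewrite mulrC.
Qed.

Lemma sqnorm_sinv_diff x h : x != 0 ->
  sqnorm (sinv_diff x h) = ((sqnorm x)^-1) ^+ 2 * sqnorm h.
Proof.
rewrite -sqnorm_eq0 => x0.
rewrite sqnormB !sqnormZ dotZl dotZr (dotC h x).
by move: x0; rewrite /sqnorm => x0; field.
Qed.

End StandardInversionDifferential.

Section ConformalDeterminant.
Context {R : realFieldType} {n : nat}.

Lemma det_conformal (f : {linear 'rV[R]_n -> 'rV[R]_n}) (m : R) : 0 <= m ->
  (forall h, sqnorm (f h) = m ^+ 2 * sqnorm h) -> `|\det (lin1_mx f)| = m ^+ n.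
Proof.
move=> m0 fP.
have dot_f u v : dot (f u) (f v) = m ^+ 2 * dot u v.
  by have := fP (u + v); rewrite linearD !sqnormD !fP; lra.
have ortho : lin1_mx f *m (lin1_mx f)^T = (m ^+ 2)%:M.
  apply/matrixP => i j; rewrite !mxE.
  transitivity (dot (f (delta_mx ord0 i)) (f (delta_mx ord0 j))).
    by apply: eq_bigr => k _; rewrite !mxE.
  by rewrite dot_f dot_delta !mxE eqxx /= eq_sym mulr_natr.
have det_sq : \det (lin1_mx f) ^+ 2 = (m ^+ n) ^+ 2.
  by rewrite expr2 -{2}det_tr -det_mulmx ortho det_scalar -!exprM mulnC.
apply/eqP; rewrite -(@eqrXn2 _ 2) ?normr_ge0 ?exprn_ge0 //.
by rewrite real_normK ?num_real // det_sq.
Qed.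

Lemma lin1_mx_comp (f g : {linear 'rV[R]_n -> 'rV[R]_n}) :
  lin1_mx (f \o g) = lin1_mx g *m lin1_mx f.
Proof. by apply/row_matrixP => i; rewrite row_mul !rowE !mul_rV_lin1. Qed.

End ConformalDeterminant.

Section InversionDifferential.
Context {R : realType} {d : nat}.
Local Notation X := 'rV[R]_d.
Variable iota : X -> X.
Hypothesis iotaP : is_inversion iota.

Lemma is_diff_iota w : w != 0 -> is_diff w iota (inversion_rot iota \o sinv_diff w).
Proof.
move=> w0; pose rot : {linear X -> X} := HB.pack (inversion_rot iota)
  (GRing.isLinear.Build _ _ _ _ _ (inversion_rot_linear iotaP)).
have iota_rot : iota = inversion_rot iota \o sinv by apply/funext => x; exact: iotaE.
rewrite {1}iota_rot.
exact: (is_diff_comp (is_diff_sinv w0) (is_diff_linear_row rot (sinv w))).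
Qed.

Lemma det_diff_iota w : w != 0 ->
  `|\det (lin1_mx ('d iota w))| = ((sqnorm w)^-1) ^+ d.
Proof.
move=> w0; apply: det_conformal; first by rewrite invr_ge0 sqnorm_ge0.
move=> h; have diota := is_diff_iota w0; rewrite diff_val.
by rewrite /= sqnorm_inversion_rot // sqnorm_sinv_diff.
Qed.

Lemma omega_nil y : omega iota [::] y = 1.
Proof.
have did := is_diff_id y; rewrite /omega /= diff_val.
have -> : lin1_mx (id : X -> X) = 1%:M by apply/matrixP => i j; rewrite !mxE eqxx eq_sym.
by rewrite det1 normr1.
Qed.

Lemma is_diff_shift (a u : X) : is_diff u (fun z => z + a) id.
Proof. by apply: is_diff_eq (is_diffD (is_diff_id u) (is_diff_cst a u)) _; rewrite addr0. Qed.

Lemma differentiable_iota_shift (a u : X) : u + a != 0 ->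
  differentiable (iota \o (fun z => z + a)) u.
Proof.
move=> w0; have [Dshift _] := is_diff_shift a u.
by apply: differentiable_comp Dshift _; have [] := is_diff_iota w0.
Qed.

Lemma diff_iota_shift (a u : X) : u + a != 0 ->
  'd (iota \o (fun z => z + a)) u = 'd iota (u + a) :> (X -> X).
Proof.
move=> w0; have [Dshift dshift] := is_diff_shift a u.
have [Diota _] := is_diff_iota w0.
apply: (etrans (diff_comp Dshift Diota)).
by apply/funext => h; rewrite /comp; apply: f_equal; rewrite dshift.
Qed.

Lemma differentiable_Tinv_cons a s y : differentiable (Tinv iota s) y ->
  Tinv iota s y + a != 0 -> differentiable (Tinv iota (a :: s)) y.
Proof.
by move=> Ds w0; apply: differentiable_comp Ds (differentiable_iota_shift w0).
Qed.

Lemma omega_cons a s y : differentiable (Tinv iota s) y ->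
  Tinv iota s y + a != 0 ->
  omega iota (a :: s) y = ((sqnorm (Tinv iota s y + a))^-1) ^+ d * omega iota s y.
Proof.
move=> Ds w0.
(* Rewriting with equations between differentials sends unification into a
   very long search, so they are chained with etrans and congr1 instead. *)
have chain : 'd (Tinv iota (a :: s)) y = 'd iota (Tinv iota s y + a) \o 'd (Tinv iota s) y
    :> (X -> X).
  have -> : Tinv iota (a :: s) = (iota \o (fun z => z + a)) \o Tinv iota s by [].
  apply: (etrans (diff_comp Ds (differentiable_iota_shift w0))).
  exact: (congr1 (fun f : X -> X => f \o 'd (Tinv iota s) y) (diff_iota_shift w0)).
apply: (etrans (congr1 (fun f => `|\det (lin1_mx f)|) chain)).
rewrite (lin1_mx_comp ('d iota (Tinv iota s y + a)) ('d (Tinv iota s) y)).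
by rewrite det_mulmx normrM [X in _ * X](det_diff_iota w0) mulrC.
Qed.

End InversionDifferential.

Lemma sum_expr_le_inv {R : realFieldType} (q : R) n : 0 <= q < 1 ->
  \sum_(i < n) q ^+ i <= (1 - q)^-1.
Proof.
move=> /andP[q0 q1]; have q1' : 0 < 1 - q by rewrite subr_gt0.
have E : (1 - q) * \sum_(i < n) q ^+ i = 1 - q ^+ n by rewrite -opprB mulNr -subrX1 opprB.
by rewrite -(ler_pM2l q1') E mulfV ?gt_eqF // lerBlDr lerDl exprn_ge0.
Qed.

Section Dynamics.
Context {R : realType} {d : nat}.
Local Notation X := 'rV[R]_d.
Variables (iota : X -> X) (Zs Kc : set X) (flr : X -> X) (q : R).
Hypothesis iotaP : is_inversion iota.
Hypothesis ZsN : forall a, Zs a -> Zs (- a).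
Hypothesis flrP : is_boundary_choice Zs Kc flr.
Hypothesis q_gt0 : 0 < q.
Hypothesis q_lt1 : q < 1.
Hypothesis sqnorm_Kc : forall x, Kc x -> sqnorm x <= q.

Local Notation T := (Tmap iota flr).

Lemma Kc_Zs_eq0 x : Kc x -> Zs x -> x = 0.
Proof.
case: flrP => Kc_dir _ _ Kx Zx; have := Kc_dir x Kx x Zx.
rewrite /Defs.edist subrr subr0 !enorm_sqnorm ler_sqrt ?sqnorm_ge0 // sqnorm0.
by move=> x0; apply/eqP; rewrite -sqnorm_eq0 eq_le x0 sqnorm_ge0.
Qed.

Lemma cyl_Kc s x : cyl Kc iota s x -> Kc x.
Proof. by case: s => [|a s] //= []. Qed.

Lemma flr_shift z a : Kc z -> Zs a -> flr (z + a) = a.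
Proof. by case: flrP => _ _ flr_uniq Kz Za; symmetry; apply: flr_uniq; rewrite ?addrK. Qed.

Lemma Tmap_cyl_cons a s x : Zs a -> cyl Kc iota (a :: s) x ->
  cyl Kc iota s (T x) /\ iota (T x + a) = x.
Proof.
move=> Za [Kx [_ [z Cz <-] <-]]; suff -> : T (iota (z + a)) = z by [].
rewrite /Tmap iota_eq0 //; have [za0|za0] := eqVneq (z + a) 0.
  apply/esym/Kc_Zs_eq0; first exact: cyl_Kc Cz.
  by rewrite -(addrK a z) za0 sub0r; exact: ZsN.
by rewrite iotaK // flr_shift ?addrK //; exact: cyl_Kc Cz.
Qed.

Fixpoint Kc_chain (s : seq X) (y : X) : Prop :=
  if s is a :: s' then [/\ Zs a, Kc (Tinv iota s y) & Kc_chain s' y] else Kc y.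

Lemma Kc_chain_Tinv s y : Kc_chain s y -> Kc (Tinv iota s y).
Proof. by case: s => [|a s] //= []. Qed.

Lemma Kc_chain_base s y : Kc_chain s y -> Kc y.
Proof. by elim: s => [|a s IH] //= [_ _ /IH]. Qed.

Lemma cyl_Kc_chain s x : (forall a, a \in s -> Zs a) -> cyl Kc iota s x ->
  Kc_chain s (iter (size s) T x) /\ Tinv iota s (iter (size s) T x) = x.
Proof.
elim: s x => [|a s IH] x Zs_s Cx //=.
have [Ctx iota_Tx] := Tmap_cyl_cons (Zs_s a (mem_head a s)) Cx.
have [y_chain TinvE] := IH (T x) (fun b sb => Zs_s b (@mem_behead _ (a :: s) b sb)) Ctx.
rewrite -iterS iterSr TinvE iota_Tx; split=> //; split=> //; last exact: cyl_Kc Cx.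
exact: Zs_s (mem_head a s).
Qed.

Lemma Kc_iota_eq0 x : Kc x -> Kc (iota x) -> x = 0.
Proof.
move=> Kx Kix; apply/eqP; apply: contraT => x0; have n0 := sqnorm_gt0 x0.
have := sqnorm_Kc Kix; rewrite sqnorm_iota // => inv_le.
have inv_ge0 : 0 <= (sqnorm x)^-1 by rewrite invr_ge0 sqnorm_ge0.
have := ler_pM inv_ge0 (sqnorm_ge0 x) inv_le (sqnorm_Kc Kx).
rewrite mulVf ?lt0r_neq0 // => qq.
have qq1 : q * q < 1 by have := q_gt0; have := q_lt1; nra.
by rewrite ltNge qq in qq1.
Qed.

Lemma Kc_chain_Tinv_eq0 s y : Kc_chain s y -> Tinv iota s y = 0 -> y = 0.
Proof.
elim: s => [|a s IH] //= [Za _ y_chain] /eqP; rewrite iota_eq0 // addr_eq0 => /eqP ua.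
apply: IH => //; apply: Kc_Zs_eq0; first exact: Kc_chain_Tinv.
by rewrite ua; exact: ZsN.
Qed.

Lemma Kc_chain_zero_digit s y : Kc_chain s y -> 0 \in s -> y = 0.
Proof.
elim: s => [//|a s IH] [_ Kw y_chain]; rewrite in_cons => /orP[/eqP a0|]; last exact: IH.
apply: (Kc_chain_Tinv_eq0 y_chain); apply: Kc_iota_eq0; first exact: Kc_chain_Tinv.
by move: Kw; rewrite /= -a0 addr0.
Qed.

Lemma far_neq0 (w : X) : 1 <= q * sqnorm w -> w != 0.
Proof. by apply: contraTneq => ->; rewrite sqnorm0 mulr0 ler10. Qed.

Lemma far_inv_le (w : X) : 1 <= q * sqnorm w -> (sqnorm w)^-1 <= q.
Proof. by move=> far; rewrite -div1r ler_pdivrMr ?sqnorm_gt0 ?far_neq0. Qed.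

Lemma far_ge1 (w : X) : 1 <= q * sqnorm w -> 1 <= sqnorm w.
Proof. by move=> far; apply: le_trans far (ler_piMl (sqnorm_ge0 w) (ltW q_lt1)). Qed.

Lemma Kc_chain_far a s y : Kc_chain (a :: s) y -> a != 0 ->
  1 <= q * sqnorm (Tinv iota s y + a).
Proof.
move=> [Za Kw y_chain] a0.
have w0 : Tinv iota s y + a != 0.
  apply: contra a0; rewrite addr_eq0 => /eqP ua; rewrite -oppr_eq0 -ua.
  apply/eqP/Kc_Zs_eq0; first exact: Kc_chain_Tinv.
  by rewrite ua; exact: ZsN.
have := sqnorm_Kc Kw; rewrite /= sqnorm_iota //.
by rewrite -ler_pdivrMr ?sqnorm_gt0 // mul1r.
Qed.

Lemma differentiable_Tinv_chain s y : Kc_chain s y -> 0 \notin s ->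
  differentiable (Tinv iota s) y.
Proof.
elim: s => [_ _|a s IH y_chain]; first by have [] := is_diff_id y.
rewrite in_cons negb_or eq_sym => /andP[a0 s0].
apply: differentiable_Tinv_cons => //; first by apply: IH s0; case: y_chain.
exact/far_neq0/Kc_chain_far.
Qed.

Lemma sqnorm_iotaB_far (w w' : X) : 1 <= q * sqnorm w -> 1 <= q * sqnorm w' ->
  sqnorm (iota w - iota w') <= q ^+ 2 * sqnorm (w - w').
Proof.
move=> far far'; rewrite sqnorm_iotaB ?far_neq0 // mulrC.
apply: ler_wpM2r; first exact: sqnorm_ge0.
by rewrite invfM expr2; apply: ler_pM; rewrite ?invr_ge0 ?sqnorm_ge0 ?far_inv_le.
Qed.

Lemma Kc_chain_contract s y y' : Kc_chain s y -> Kc_chain s y' -> 0 \notin s ->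
  sqnorm (Tinv iota s y - Tinv iota s y') <= q ^+ (2 * size s) * sqnorm (y - y').
Proof.
elim: s => [|a s IH] y_chain y'_chain; first by rewrite muln0 expr0 mul1r.
rewrite in_cons negb_or eq_sym => /andP[a0 s0].
have [[_ _ ys] [_ _ ys']] := (y_chain, y'_chain).
apply: le_trans (sqnorm_iotaB_far (Kc_chain_far y_chain a0) (Kc_chain_far y'_chain a0)) _.
rewrite opprD addrACA subrr addr0 mulnS exprD -mulrA.
by apply: ler_wpM2l; [rewrite exprn_ge0 ?ltW | exact: IH].
Qed.

Lemma sqnormB_Kc y y' : Kc y -> Kc y' -> sqnorm (y - y') <= 4.
Proof.
move=> /sqnorm_Kc Ky /sqnorm_Kc Ky'.
by have := sqnorm_ge0 (y + y'); have := q_lt1; rewrite sqnormD sqnormB; lra.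
Qed.

Lemma Kc_chain_step_distortion a s y y' :
  Kc_chain (a :: s) y -> Kc_chain (a :: s) y' -> a != 0 -> 0 \notin s ->
  ((sqnorm (Tinv iota s y + a))^-1) ^+ d <=
    expR (9 * d%:R * q ^+ size s) * ((sqnorm (Tinv iota s y' + a))^-1) ^+ d.
Proof.
move=> y_chain y'_chain a0 s0; have [[_ _ ys] [_ _ ys']] := (y_chain, y'_chain).
have far := Kc_chain_far y_chain a0; have far' := Kc_chain_far y'_chain a0.
set e := q ^+ size s; set w := Tinv iota s y + a; set w' := Tinv iota s y' + a.
have e_unit : 0 < e <= 1 by rewrite exprn_gt0 // exprn_ile1 // ltW.
have close : sqnorm (w' - w) <= 4 * e ^+ 2.
  have -> : w' - w = Tinv iota s y' - Tinv iota s y by rewrite opprD addrACA subrr addr0.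
  apply: le_trans (Kc_chain_contract ys' ys s0) _.
  rewrite mulnC exprM -/e mulrC; apply: ler_wpM2r; first exact: sqr_ge0.
  exact: sqnormB_Kc (Kc_chain_base ys') (Kc_chain_base ys).
have grow : sqnorm w' <= (1 + 9 * e) * sqnorm w.
  by have := sqnorm_perturb (far_ge1 far) e_unit close; rewrite addrC subrK.
have inv_le : (sqnorm w)^-1 <= expR (9 * e) * (sqnorm w')^-1.
  have [n0 n'0] := (sqnorm_gt0 (far_neq0 far), sqnorm_gt0 (far_neq0 far')).
  apply: le_trans (_ : (1 + 9 * e) * (sqnorm w')^-1 <= _); last first.
    by rewrite ler_wpM2r ?invr_ge0 ?sqnorm_ge0 // expR_ge1Dx.
  by rewrite -div1r ler_pdivrMr // mulrAC ler_pdivlMr // mul1r.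
have -> : 9 * d%:R * e = d%:R * (9 * e) by ring.
rewrite expRM_natl -exprMn lerXn2r // ?nnegrE ?invr_ge0 ?sqnorm_ge0 //.
by rewrite mulr_ge0 ?expR_ge0 ?invr_ge0 ?sqnorm_ge0.
Qed.

Lemma omega_Kc_chain_distortion s y y' :
  Kc_chain s y -> Kc_chain s y' -> 0 \notin s ->
  omega iota s y <= expR (9 * d%:R * \sum_(i < size s) q ^+ i) * omega iota s y'.
Proof.
elim: s => [|a s IH] y_chain y'_chain.
  by rewrite !omega_nil big_ord0 mulr0 expR0 mul1r.
rewrite in_cons negb_or eq_sym => /andP[a0 s0].
have [[_ _ ys] [_ _ ys']] := (y_chain, y'_chain).
have far := Kc_chain_far y_chain a0; have far' := Kc_chain_far y'_chain a0.
rewrite (omega_cons iotaP (differentiable_Tinv_chain ys s0) (far_neq0 far)).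
rewrite (omega_cons iotaP (differentiable_Tinv_chain ys' s0) (far_neq0 far')).
rewrite big_ord_recr [X in expR X]mulrDr [X in expR X]addrC expRD mulrACA.
apply: ler_pM; rewrite ?exprn_ge0 ?invr_ge0 ?sqnorm_ge0 ?normr_ge0 //.
  exact: Kc_chain_step_distortion.
exact: IH.
Qed.

Lemma omega_cyl_distortion s x x' : (forall a, a \in s -> Zs a) ->
  cyl Kc iota s x -> cyl Kc iota s x' ->
  omega iota s (iter (size s) T x) <=
    expR (9 * d%:R / (1 - q)) * omega iota s (iter (size s) T x').
Proof.
move=> Zs_s Cx Cx'.
have [[y_chain _] [y'_chain _]] := (cyl_Kc_chain Zs_s Cx, cyl_Kc_chain Zs_s Cx').
have C_ge1 : 1 <= expR (9 * d%:R / (1 - q)).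
  apply: le_trans (expR_ge1Dx _); rewrite lerDl.
  by apply: divr_ge0; [exact: mulr_ge0 | rewrite subr_ge0 ltW].
have [s0|s0] := boolP (0 \in s).
  rewrite (Kc_chain_zero_digit y_chain s0) (Kc_chain_zero_digit y'_chain s0).
  by rewrite ler_peMl ?normr_ge0.
apply: le_trans (omega_Kc_chain_distortion y_chain y'_chain s0) _.
apply: ler_wpM2r; first exact: normr_ge0.
rewrite ler_expR; apply: ler_wpM2l; first exact: mulr_ge0.
by apply: sum_expr_le_inv; rewrite (ltW q_gt0) q_lt1.
Qed.

End Dynamics.

Lemma ereal_sup_le_mul_inf {R : realType} {T : Type} (A : set T) (f : T -> R) (L : R) :
  0 < L -> (forall y y', A y -> A y' -> f y <= L * f y') ->
  (ereal_sup [set (f y)%:E | y in A] <= L%:E * ereal_inf [set (f y)%:E | y in A])%E.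
Proof.
move=> L0 fA; rewrite -lee_pdivrMl //; apply: le_ereal_inf_tmp => _ [y' Ay' <-].
rewrite lee_pdivrMl //; apply: ge_ereal_sup => _ [y Ay <-].
by rewrite -EFinM lee_fin fA.
Qed.

Lemma norm_euclidean_sqnorm {R : realType} {d : nat} (Zs Kc : set 'rV[R]_d) flr :
  is_boundary_choice Zs Kc flr -> norm_euclidean Zs ->
  exists q : R, [/\ 0 < q, q < 1 & forall x, Kc x -> sqnorm x <= q].
Proof.
move=> [Kc_dir _ _] [c c1 K_le_c]; set r := Num.max c 2^-1.
have r0 : 0 < r by rewrite lt_max invr_gt0 ltr0n orbT.
exists (r ^+ 2); split; first exact: exprn_gt0.
  by rewrite expr_lt1 ?(ltW r0) // gt_max c1 invf_lt1 ?ltr1n.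
move=> x Kx; rewrite -sqr_enorm; apply: lerXn2r; rewrite ?nnegrE ?enorm_ge0 ?(ltW r0) //.
by rewrite /r le_max (K_le_c _ (Kc_dir _ Kx)).
Qed.

Unset Implicit Arguments.

Theorem lemma4p3 (R : realType) (d : nat) (iota : 'rV[R]_d -> 'rV[R]_d)
  (Zs Kc : set 'rV[R]_d) (flr : 'rV[R]_d -> 'rV[R]_d) :
  is_inversion iota ->
  is_cocompact_lattice Zs ->
  is_boundary_choice Zs Kc flr ->
  norm_euclidean Zs ->
  exists2 L : R, 1 < L &
    forall s : seq 'rV[R]_d, (forall a, a \in s -> Zs a) ->
      cyl Kc iota s !=set0 ->
      let A := iter (size s) (Tmap iota flr) @` cyl Kc iota s in
      (ereal_sup [set (omega iota s y)%:E | y in A]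
        <= L%:E * ereal_inf [set (omega iota s y)%:E | y in A])%E.
Proof.
move=> iotaP [Z0 ZsB _ _] flrP /(norm_euclidean_sqnorm flrP)[q [q0 q1 Kc_q]].
have ZsN a : Zs a -> Zs (- a) by move=> Za; rewrite -sub0r; exact: ZsB.
set C := expR (9 * d%:R / (1 - q)).
exists (1 + C); first by rewrite ltrDl expR_gt0.
move=> s Zs_s _ /=; apply: ereal_sup_le_mul_inf; first by rewrite ltr_wpDr ?expR_ge0.
move=> _ _ [x Cx <-] [x' Cx' <-].
apply: le_trans (omega_cyl_distortion iotaP ZsN flrP q0 q1 Kc_q Zs_s Cx Cx') _.
by rewrite ler_wpM2r ?normr_ge0 // lerDr.
Qed.
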